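(* Let $B$ be a nilpotent finite-dimensional Leibniz algebra over a field with $\dim B\ge 2$ and $\dim R_1(B)=1$, where $R_1(B)=\{r\in B: Br=0\}$. Then there is no finite-dimensional Leibniz algebra $A$ in which $B$ is an ideal and $B\subseteq\Phi(A)$.
   Context: A (left) Leibniz algebra is an algebra satisfying $x(yz)=(xy)z+y(xz)$ for all $x,y,z$. Nilpotent means $B^t=0$ for some $t$, where $B^1=B$, $B^{j+1}=BB^j$. An ideal is a subspace $I$ with $AI\subseteq I$ and $IA\subseteq I$. $\Phi(A)$, the Frattini subalgebra, is the intersection of all maximal subalgebras of $A$. *)

From HB Require Import structures.
From mathcomp Require Import all_boot all_order all_algebra.
Set Implicit Arguments. Unset Strict Implicit. Unset Printing Implicit Defensive.
Import Order.TTheory GRing.Theory.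
Local Open Scope ring_scope.

Section LeibnizDefs.
Variables (F : fieldType) (V : vectType F) (mul : V -> V -> V).

Definition bilinear_mul : Prop :=
  (forall (a : F) (u v w : V), mul (a *: u + v) w = a *: mul u w + mul v w) /\
  (forall (a : F) (u v w : V), mul w (a *: u + v) = a *: mul w u + mul w v).

Definition leibniz : Prop :=
  forall x y z : V, mul x (mul y z) = mul (mul x y) z + mul y (mul x z).

(* product UW of subspaces: span of all products u w (bilinearity makes
   spanning by basis products correct) *)
Definition prodv (U W : {vspace V}) : {vspace V} :=
  <<[seq mul u w | u <- vbasis U, w <- vbasis W]>>%VS.

(* lower powers: lpow B n = B^(n+1), i.e. B^1 = B, B^(j+1) = B B^j *)
Fixpoint lpow (B : {vspace V}) (n : nat) : {vspace V} :=
  match n with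
  | 0 => B
  | k.+1 => prodv B (lpow B k)
  end.

Definition nilpotent_sub (B : {vspace V}) : Prop :=
  exists n : nat, lpow B n = 0%VS.

Definition R1 (B : {vspace V}) : {vspace V} :=
  (B :&: \bigcap_(b <- vbasis B) lker (linfun (mul b)))%VS.

Definition subalgebra (M : {vspace V}) : Prop :=
  forall x y, x \in M -> y \in M -> mul x y \in M.

Definition ideal (I : {vspace V}) : Prop :=
  forall x y, x \in I -> mul x y \in I /\ mul y x \in I.

Definition maximal_subalgebra (M : {vspace V}) : Prop :=
  [/\ subalgebra M, M != fullv &
      forall N : {vspace V}, subalgebra N -> (M <= N)%VS ->
        N = M \/ N = fullv].

(* x belongs to Phi(A), the intersection of all maximal subalgebras
   (empty intersection = A) *)
Definition in_frattini (x : V) : Prop :=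
  forall M : {vspace V}, maximal_subalgebra M -> x \in M.

End LeibnizDefs.

(* Put B_1 = {v in B : B v <= <[z]>}; it is stable under left multiplication
   by A (Leibniz identity), and nilpotency forces B_1 to be strictly larger
   than <[z]>: if B^(r+2) = 0 <> B^(r+1), then B^(r+1) = <[z]> and B^r <= B_1.
   Choose a complement W of <[z]> in B_1.  The pairing B x W -> <[z]>,
   (b, w) |-> b w, is nondegenerate on the W side (a vector of W killed by B
   lies in R_1(B) = <[z]>), hence every linear map W -> <[z]> is of the form
   w |-> b w for some b in B.  Consequently the stabiliser
   C = {a : a W <= W}, a subalgebra by the Leibniz identity, is proper (some
   b in B sends W onto z) and supplements B: for any a, the <[z]>-component
   of w |-> a w is realised by some b in B, and then a - b lies in C.
   Finally a proper subalgebra C sits in a maximal one M, so if B were in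
   the Frattini subalgebra, A = C + B <= M would be a contradiction. *)
From HB Require Import structures.
From mathcomp Require Import all_boot all_order all_algebra zify.
From Stdlib Require Import Classical_Prop.
Set Implicit Arguments. Unset Strict Implicit. Unset Printing Implicit Defensive.
Import Order.TTheory GRing.Theory.
Local Open Scope ring_scope.

Section Subspaces.
Variables (F : fieldType) (V : vectType F).

Lemma memv_bigcap_seq (I : eqType) (s : seq I) (U : I -> {vspace V}) x :
  (x \in \bigcap_(i <- s) U i)%VS <-> (forall i, i \in s -> x \in U i).
Proof.
elim: s => [|i s IH]; first by rewrite big_nil; split => // _; exact: memvf.
rewrite big_cons memv_cap; split.
  by move=> /andP[xUi /IH xUs] j; rewrite inE => /orP[/eqP->|/xUs].
move=> xU; rewrite xU ?mem_head //=.
by apply/IH => j js; apply: xU; rewrite inE js orbT.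
Qed.

Lemma linear_basis_sub (f : {linear V -> V}) (U X : {vspace V}) v :
  (forall u, u \in vbasis U -> f u \in X) -> v \in U -> f v \in X.
Proof.
move=> fX vU; rewrite (coord_vbasis vU) linear_sum; apply: rpred_sum => i _.
by rewrite linearZ; apply/rpredZ/fX/mem_nth; rewrite size_tuple.
Qed.

Lemma line_coordK (z v : V) :
  z != 0 -> v \in <[z]>%VS -> v = coord [tuple z] ord0 v *: z.
Proof.
move=> z_neq0 /vlineP[k ->]; rewrite linearZ /=.
have := @coord_free _ _ 1 [tuple z] ord0 ord0.
by rewrite seq1_free z_neq0 => /(_ isT) /= ->; rewrite mulr1.
Qed.

End Subspaces.

Section Frattini.
Variables (F : fieldType) (V : vectType F) (mul : V -> V -> V).

Lemma maximal_subalgebra_exists (N : {vspace V}) :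
  subalgebra mul N -> N != fullv ->
  exists2 M, maximal_subalgebra mul M & (N <= M)%VS.
Proof.
move: {-1}(\dim {:V} - \dim N)%N (leqnn (\dim {:V} - \dim N)%N) => k.
elim: k N => [|k IH] N codimN sN N_proper.
  move: N_proper; rewrite eqEdim subvf /=.
  by move: codimN; rewrite leqn0 subn_eq0 => ->.
case: (classic (exists N' : {vspace V},
  [/\ subalgebra mul N', (N <= N')%VS, N' != N & N' != fullv])).
  move=> [N' [sN' NN' N'_neqN N'_proper]].
  have dimNN' : (\dim N < \dim N')%N.
    rewrite ltn_neqAle dimvS // andbT; apply: contraNneq N'_neqN => eq_dim.
    by rewrite eq_sym eqEdim NN' eq_dim /=.
  have [|M maxM N'M] := IH N' _ sN' N'_proper.
    by have := dimvS (subvf N'); move: codimN; lia.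
  by exists M => //; apply: subv_trans N'M.
move=> noN'; exists N => //; split => // N' sN' NN'.
case: (eqVneq N' N) => [|N'_neqN]; first by left.
case: (eqVneq N' fullv) => [|N'_proper]; first by right.
by case: noN'; exists N'.
Qed.

Lemma frattini_no_supplement (B C : {vspace V}) :
  subalgebra mul C -> C != fullv -> (C + B)%VS = fullv ->
  ~ (forall x, x \in B -> in_frattini mul x).
Proof.
move=> sC C_proper CB_full B_frattini.
have [M maxM CM] := maximal_subalgebra_exists sC C_proper.
have BM : (B <= M)%VS by apply/subvP => x xB; exact: B_frattini x xB M maxM.
case: maxM => _ M_proper _.
by move: M_proper; rewrite eqEdim subvf -CB_full dimvS // subv_add CM.
Qed.

End Frattini.

Section BilinearProduct.
Variables (F : fieldType) (V : vectType F) (mul : V -> V -> V).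
Hypothesis bil : bilinear_mul mul.

Lemma mulDl u v w : mul (u + v) w = mul u w + mul v w.
Proof. by have := (proj1 bil) 1 u v w; rewrite !scale1r. Qed.
Lemma mulDr u v w : mul w (u + v) = mul w u + mul w v.
Proof. by have := (proj2 bil) 1 u v w; rewrite !scale1r. Qed.
Lemma mul0l w : mul 0 w = 0.
Proof. by apply: (addrI (mul 0 w)); rewrite -mulDl !addr0. Qed.
Lemma mul0r w : mul w 0 = 0.
Proof. by apply: (addrI (mul w 0)); rewrite -mulDr !addr0. Qed.
Lemma mulZl a u w : mul (a *: u) w = a *: mul u w.
Proof. by have := (proj1 bil) a u 0 w; rewrite !addr0 mul0l addr0. Qed.
Lemma mulZr a u w : mul w (a *: u) = a *: mul w u.
Proof. by have := (proj2 bil) a u 0 w; rewrite !addr0 mul0r addr0. Qed.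
Lemma mulBl u v w : mul (u - v) w = mul u w - mul v w.
Proof. by rewrite mulDl -scaleN1r mulZl scaleN1r. Qed.
Lemma mul_suml (I : Type) (r : seq I) (P : pred I) (f : I -> V) w :
  mul (\sum_(i <- r | P i) f i) w = \sum_(i <- r | P i) mul (f i) w.
Proof. by elim/big_rec2: _ => [|i x y _ <-]; rewrite ?mul0l ?mulDl. Qed.
Lemma mul_sumr (I : Type) (r : seq I) (P : pred I) (f : I -> V) w :
  mul w (\sum_(i <- r | P i) f i) = \sum_(i <- r | P i) mul w (f i).
Proof. by elim/big_rec2: _ => [|i x y _ <-]; rewrite ?mul0r ?mulDr. Qed.

Definition lmul (b : V) := fun x => mul b x.
Fact lmul_is_linear b : linear (lmul b).
Proof. by move=> a u v; rewrite /lmul mulDr mulZr. Qed.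
HB.instance Definition _ b :=
  GRing.isLinear.Build F V V *:%R (lmul b) (lmul_is_linear b).

Definition rmul (b : V) := fun x => mul x b.
Fact rmul_is_linear b : linear (rmul b).
Proof. by move=> a u v; rewrite /rmul mulDl mulZl. Qed.
HB.instance Definition _ b :=
  GRing.isLinear.Build F V V *:%R (rmul b) (rmul_is_linear b).

Lemma linfun_mul b x : linfun (mul b) x = mul b x.
Proof. by rewrite (_ : linfun (mul b) = linfun (lmul b)) // lfunE. Qed.

Lemma mul_basis_eq0 (U : {vspace V}) y b :
  (forall u, u \in vbasis U -> mul u y = 0) -> b \in U -> mul b y = 0.
Proof.
move=> uy0 bU; apply/eqP; rewrite -memv0.
apply: (@linear_basis_sub _ _ (rmul y) U) bU => u /uy0 uy_eq0.
by rewrite memv0; apply/eqP.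
Qed.

Lemma memR1 (B : {vspace V}) r :
  r \in R1 mul B <-> r \in B /\ forall b, b \in B -> mul b r = 0.
Proof.
rewrite /R1 memv_cap; split.
  move=> /andP[rB /memv_bigcap_seq rker]; split => // b; apply: mul_basis_eq0.
  by move=> u /rker; rewrite memv_ker linfun_mul => /eqP.
move=> [rB Br0]; rewrite rB /=; apply/memv_bigcap_seq => b /vbasis_mem bB.
by rewrite memv_ker linfun_mul Br0.
Qed.

Lemma mul_prodv (U W : {vspace V}) x y :
  x \in U -> y \in W -> mul x y \in prodv mul U W.
Proof.
move=> xU yW; apply: (@linear_basis_sub _ _ (rmul y) U) xU => u uU.
apply: (@linear_basis_sub _ _ (lmul u) W) yW => w wW.
by apply: memv_span; apply/allpairsP; exists (u, w).
Qed.

Lemma prodv_sub (U W X : {vspace V}) :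
  (forall x y, x \in U -> y \in W -> mul x y \in X) -> (prodv mul U W <= X)%VS.
Proof.
move=> UWX; apply/span_subvP => v /allpairsP[[u w] /= [uU wW ->]].
by apply: UWX; apply: vbasis_mem.
Qed.

Lemma nilpotent_last_power (B : {vspace V}) :
  nilpotent_sub mul B -> B != 0%VS ->
  exists s, lpow mul B s != 0%VS /\ lpow mul B s.+1 = 0%VS.
Proof.
move=> [n Bn0] B_neq0.
have ex0 : exists n, lpow mul B n == 0%VS by exists n; apply/eqP.
case: (ex_minnP ex0) => [[|s] /eqP Bs0 smin].
  by rewrite /= in Bs0; rewrite Bs0 eqxx in B_neq0.
by exists s; split => //; apply/negP => /smin; rewrite ltnn.
Qed.

Section PairingOntoLine.
Variables (B : {vspace V}) (m : nat) (w : m.-tuple V) (z : V).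
Hypothesis z_neq0 : z != 0.
Hypothesis pair_in_line : forall b, b \in B -> forall i : 'I_m, mul b w`_i \in <[z]>%VS.
Hypothesis pair_nondegenerate : forall x : 'I_m -> F,
  (forall b, b \in B -> mul b (\sum_i x i *: w`_i) = 0) -> forall i, x i = 0.

Lemma pairing_onto_line (c : 'I_m -> F) :
  exists2 b, b \in B & forall i : 'I_m, mul b w`_i = c i *: z.
Proof.
pose beta := vbasis B.
have betaB (j : 'I_(\dim B)) : beta`_j \in B.
  by apply/vbasis_mem/mem_nth; rewrite size_tuple.
(* The Gram matrix of the pairing, in the basis beta and the family w. *)
pose M := \matrix_(j < \dim B, i < m) coord [tuple z] ord0 (mul beta`_j w`_i).
have gram_row_full : row_full M.
  rewrite /row_full -mxrank_tr; apply: inj_row_free => v vM0.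
  pose s := \sum_i v 0 i *: w`_i.
  have betas0 (j : 'I_(\dim B)) : mul beta`_j s = 0.
    have sz : mul beta`_j s \in <[z]>%VS.
      rewrite mul_sumr; apply: rpred_sum => i _; rewrite mulZr.
      exact/rpredZ/pair_in_line.
    have gram_s : coord [tuple z] ord0 (mul beta`_j s) = (v *m M^T) 0 j.
      rewrite !mxE mul_sumr linear_sum; apply: eq_bigr => i _.
      by rewrite !mxE mulZr linearZ.
    by rewrite (line_coordK z_neq0 sz) gram_s vM0 mxE scale0r.
  have Bs0 b : b \in B -> mul b s = 0.
    apply: mul_basis_eq0 => u /(nthP 0)[j]; rewrite size_tuple => jlt <-.
    exact: (betas0 (Ordinal jlt)).
  by apply/rowP => i; rewrite mxE (pair_nondegenerate Bs0).
have /submxP[D cDM] := submx_full (\row_i c i) gram_row_full.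
exists (\sum_j D 0 j *: beta`_j); first by apply: rpred_sum => j _; apply: rpredZ.
move=> i; have bz : mul (\sum_j D 0 j *: beta`_j) w`_i \in <[z]>%VS.
  by apply: pair_in_line; apply: rpred_sum => j _; apply: rpredZ.
rewrite (line_coordK z_neq0 bz); congr (_ *: _).
have := congr1 (fun A : 'M[F]_(1, m) => A 0 i) cDM; rewrite !mxE => ->.
rewrite mul_suml linear_sum; apply: eq_bigr => k _.
by rewrite mulZl linearZ /= !mxE.
Qed.

End PairingOntoLine.

Section SupplementOfB.
Variable B : {vspace V}.
Hypotheses (leib : leibniz mul) (B_ideal : ideal mul B)
  (B_nil : nilpotent_sub mul B) (dimB_ge2 : (2 <= \dim B)%N)
  (dimR1 : \dim (R1 mul B) = 1%N).

Let z := vpick (R1 mul B).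

Lemma z_neq0 : z != 0.
Proof. by rewrite /z vpick0 -dimv_eq0 dimR1. Qed.

Lemma R1_line : R1 mul B = <[z]>%VS.
Proof.
apply/eqP; rewrite eq_sym eqEdim -memvE memv_pick /=.
by rewrite dimR1 dim_vline z_neq0.
Qed.

Lemma mem_line v : v \in <[z]>%VS <-> v \in B /\ forall b, b \in B -> mul b v = 0.
Proof. by rewrite -R1_line; apply: memR1. Qed.

Lemma line_lmul_stable a v : v \in <[z]>%VS -> mul a v \in <[z]>%VS.
Proof.
move=> /mem_line[vB Bv0]; apply/mem_line; split; first by case: (B_ideal a vB).
move=> b bB; have [baB _] := B_ideal a bB.
by rewrite leib Bv0 // Bv0 // mul0r addr0.
Qed.

Definition B1 := (B :&: \bigcap_(b <- vbasis B) ((linfun (mul b)) @^-1: <[z]>))%VS.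

Lemma memB1 v : v \in B1 <-> v \in B /\ forall b, b \in B -> mul b v \in <[z]>%VS.
Proof.
rewrite /B1 memv_cap; split.
  move=> /andP[vB /memv_bigcap_seq vpre]; split => // b bB.
  apply: (@linear_basis_sub _ _ (rmul v) B) bB => u /vpre.
  by rewrite -memv_preim linfun_mul.
move=> [vB Bv]; rewrite vB /=; apply/memv_bigcap_seq => b /vbasis_mem bB.
by rewrite -memv_preim linfun_mul Bv.
Qed.

Lemma B1_lmul_stable a v : v \in B1 -> mul a v \in B1.
Proof.
move=> /memB1[vB Bv]; apply/memB1; split; first by case: (B_ideal a vB).
move=> b bB; have [baB _] := B_ideal a bB.
by rewrite leib rpredD //; [apply: Bv | apply/line_lmul_stable/Bv].
Qed.

Lemma line_sub_B1 : (<[z]> <= B1)%VS.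
Proof.
rewrite -memvE; have /mem_line[zB Bz0] := memv_line z.
by apply/memB1; split => // b bB; rewrite Bz0 ?mem0v.
Qed.

Lemma lpow_sub n : (lpow mul B n <= B)%VS.
Proof.
case: n => [|n] /=; first exact: subvv.
by apply: prodv_sub => x y xB _; case: (B_ideal y xB).
Qed.

Lemma B1_not_sub_line : ~ (B1 <= <[z]>)%VS.
Proof.
move=> B1z.
have B_neq0 : B != 0%VS by rewrite -dimv_eq0 -lt0n; apply: leq_trans dimB_ge2.
have [s [Bs_neq0 Bs10]] := nilpotent_last_power B_nil B_neq0.
have Bs_line : lpow mul B s = <[z]>%VS.
  apply/eqP; rewrite -R1_line eqEdim dimR1 lt0n dimv_eq0 Bs_neq0 andbT.
  apply/subvP => x xBs; apply/memR1; split; first exact: (subvP (lpow_sub s)).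
  by move=> b bB; apply/eqP; rewrite -memv0 -Bs10 mul_prodv.
case: s Bs_neq0 Bs10 Bs_line => [|r] _ _ Br1_line.
  by move: dimB_ge2; rewrite /= in Br1_line; rewrite Br1_line dim_vline z_neq0.
have Br_B1 : (lpow mul B r <= B1)%VS.
  apply/subvP => p pBr; apply/memB1; split; first exact: (subvP (lpow_sub r)).
  by move=> b bB; rewrite -Br1_line mul_prodv.
have : (lpow mul B r.+1 <= 0)%VS.
  apply: prodv_sub => x y xB yBr.
  have /mem_line[_ By0] := subvP B1z _ (subvP Br_B1 _ yBr).
  by rewrite By0 // mem0v.
by rewrite subv0 Br1_line -dimv_eq0 dim_vline z_neq0.
Qed.

Definition W := (B1 :\: <[z]>)%VS.

Lemma W_line_B1 : (W + <[z]>)%VS = B1.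
Proof. by rewrite /W -{2}(addv_diff_cap B1 <[z]>) (capv_idPr line_sub_B1). Qed.

Lemma W_sub_B1 : (W <= B1)%VS.
Proof. exact: diffvSl. Qed.

Lemma W_cap_line v : v \in W -> v \in <[z]>%VS -> v = 0.
Proof.
by move=> vW vz; apply/eqP; rewrite -memv0 -(capv_diff B1 <[z]>) memv_cap vW.
Qed.

Lemma W_neq0 : W != 0%VS.
Proof. by apply: contra_notN B1_not_sub_line => /eqP W0; rewrite -W_line_B1 W0 add0v. Qed.

Let w := vbasis W.

Lemma memw (i : 'I_(\dim W)) : w`_i \in W.
Proof. by apply/vbasis_mem/mem_nth; rewrite size_tuple. Qed.

Lemma B_onto_W_line (c : 'I_(\dim W) -> F) :
  exists2 b, b \in B & forall i : 'I_(\dim W), mul b w`_i = c i *: z.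
Proof.
apply: pairing_onto_line; [exact: z_neq0 | |].
  by move=> b bB i; have /memB1[_] := subvP W_sub_B1 _ (memw i); apply.
move=> x Bx0; pose s := \sum_i x i *: w`_i.
have sW : s \in W by apply: rpred_sum => i _; apply/rpredZ/memw.
have sz : s \in <[z]>%VS.
  by apply/mem_line; split => //; have /memB1[] := subvP W_sub_B1 _ sW.
by move/freeP: (basis_free (vbasisP W)); apply; apply: W_cap_line sz.
Qed.

Definition C := (\bigcap_(u <- vbasis W) ((linfun (rmul u)) @^-1: W))%VS.

Lemma memC a : a \in C <-> forall y, y \in W -> mul a y \in W.
Proof.
split.
  move=> /memv_bigcap_seq aC y yW.
  apply: (@linear_basis_sub _ _ (lmul a) W) yW => u /aC.
  by rewrite -memv_preim lfunE.
move=> aW; apply/memv_bigcap_seq => u /vbasis_mem uW.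
by rewrite -memv_preim lfunE /= /rmul aW.
Qed.

(* C is a subalgebra, since (a a') y = a (a' y) - a' (a y). *)
Lemma C_subalgebra : subalgebra mul C.
Proof.
move=> a a' /memC aW /memC a'W; apply/memC => y yW.
have -> : mul (mul a a') y = mul a (mul a' y) - mul a' (mul a y) by rewrite leib addrK.
by apply: rpredB; [apply/aW/a'W | apply/a'W/aW].
Qed.

(* An element of B sending every w_i to z does not stabilise W. *)
Lemma C_proper : C != fullv.
Proof.
have dimW_gt0 : (0 < \dim W)%N by rewrite lt0n dimv_eq0 W_neq0.
pose i0 : 'I_(\dim W) := Ordinal dimW_gt0.
have [b _ bw] := B_onto_W_line (fun _ => 1).
apply/negP => /eqP C_full.
have /memC /(_ _ (memw i0)) : b \in C by rewrite C_full memvf.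
rewrite bw scale1r => zW.
by move: z_neq0; rewrite (W_cap_line zW (memv_line z)) eqxx.
Qed.

(* A = C + B: correct a by an element of B realising the <[z]>-components
   of w |-> a w. *)
Lemma C_supplements_B : (C + B)%VS = fullv.
Proof.
apply/eqP; rewrite eqEsubv subvf /=; apply/subvP => a _.
have a_decomp (i : 'I_(\dim W)) : exists c, mul a w`_i - c *: z \in W.
  have : mul a w`_i \in B1 by apply/B1_lmul_stable/(subvP W_sub_B1)/memw.
  rewrite -W_line_B1 => /memv_addP[u uW [v /vlineP[c ->] ->]].
  by exists c; rewrite addrK.
have [c ac] := fin_all_exists a_decomp.
have [b bB bw] := B_onto_W_line c.
rewrite -(subrK b a) memv_add //; apply/memC => y yW.
apply: (@linear_basis_sub _ _ (lmul (a - b)) W) yW => u.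
move=> /(nthP 0)[j]; rewrite size_tuple => jlt <-.
by rewrite /= /lmul mulBl (bw (Ordinal jlt)); apply: (ac (Ordinal jlt)).
Qed.

End SupplementOfB.

End BilinearProduct.

Theorem mainTheorem16 (F : fieldType) (V : vectType F) (mul : V -> V -> V)
  (B : {vspace V}) :
  bilinear_mul mul -> leibniz mul ->
  ideal mul B -> nilpotent_sub mul B ->
  (2 <= \dim B)%N -> \dim (R1 mul B) = 1%N ->
  ~ (forall x, x \in B -> in_frattini mul x).
Proof.
move=> bil leib B_ideal B_nil dimB dimR1.
apply: (frattini_no_supplement (B := B) (C := C mul B)).
- exact: C_subalgebra.
- exact: C_proper.
- exact: C_supplements_B.
Qed.
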